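(* Let $L\ge1$ and let $a_{-L-1},\dots,a_{L}$ be positive reals. On the open set of $(x_{-L},\dots,x_{-1},E,x_1,\dots,x_L)\in\mathbb R^{2L+1}$ with all $x_j\ne0$, define $F_L(x_{-L},\dots,x_{-1},E,x_1,\dots,x_L)=(b_{-L},\dots,b_L)$ by $$b_n=\begin{cases}E-a_{n-1}x_{n-1}^{-1}-a_nx_n,& -L\le n<0,\\ E-a_{-1}x_{-1}^{-1}-a_0x_1^{-1},& n=0,\\ E-a_nx_{n+1}^{-1}-a_{n-1}x_n,& 0<n\le L,\end{cases}$$ with the convention $x_{-L-1}^{-1}=x_{L+1}^{-1}=0$. Then the absolute value of the Jacobian determinant of $F_L$ equals $$\Big(\prod_{n=-L}^{L-1}a_n\Big)\Big(1+\sum_{j=1}^{L}\prod_{i=1}^{j}x_i^{-2}+\sum_{j=1}^{L}\prod_{i=1}^{j}x_{-i}^{-2}\Big).$$ Moreover, if $u=(u(-L),\dots,u(L))$ is a normalized ($\sum|u(n)|^2=1$) real eigenvector, with all entries nonzero, of the tridiagonal matrix with diagonal $b_{-L},\dots,b_L$ and off-diagonal entries $a_{-L},\dots,a_{L-1}$, with eigenvalue $E$, and $x_n=u(n+1)/u(n)$ for $n<0$, $x_n=u(n-1)/u(n)$ for $n>0$, then this Jacobian equals $\big(\prod_{n=-L}^{L-1}a_n\big)u(0)^{-2}$, and $F_L(x_{-L},\dots,x_{-1},E,x_1,\dots,x_L)=(b_{-L},\dots,b_L)$. *)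

From HB Require Import structures.
From Stdlib Require Import Reals ZArith ClassicalEpsilon FunctionalExtensionality.
From mathcomp Require Import all_boot all_order all_algebra.

Set Implicit Arguments.
Unset Strict Implicit.
Unset Printing Implicit Defensive.

Delimit Scope Z_scope with Z.
Delimit Scope R_scope with R.
Local Open Scope R_scope.

Definition Req_bool (x y : R) : bool := if Req_EM_T x y then true else false.

Lemma Req_boolP : Equality.axiom Req_bool.
Proof. by move=> x y; rewrite /Req_bool; case: Req_EM_T => h; constructor. Qed.

HB.instance Definition _ := hasDecEq.Build R Req_boolP.

Definition R_find (P : pred R) (n : nat) : option R :=
  if excluded_middle_informative (exists x, P x)
  then Some (epsilon (inhabits R0) (fun x => P x)) else None.

Lemma R_find_correct (P : pred R) n x : R_find P n = Some x -> P x.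
Proof.
rewrite /R_find; case: excluded_middle_informative => // h [<-].
exact: (epsilon_spec (inhabits R0) (fun x => P x) h).
Qed.

Lemma R_find_complete (P : pred R) : (exists x, P x) -> exists n, R_find P n.
Proof. by move=> h; exists 0%N; rewrite /R_find; case: excluded_middle_informative. Qed.

Lemma R_find_ext (P Q : pred R) : P =1 Q -> R_find P =1 R_find Q.
Proof.
move=> e n; have -> : P = Q by apply: functional_extensionality.
by [].
Qed.

HB.instance Definition _ := hasChoice.Build R R_find_correct R_find_complete R_find_ext.

Lemma R_addA : associative Rplus. Proof. by move=> x y z; rewrite Rplus_assoc. Qed.
Lemma R_addC : commutative Rplus. Proof. exact: Rplus_comm. Qed.
Lemma R_add0 : left_id R0 Rplus. Proof. exact: Rplus_0_l. Qed.
Lemma R_addN : left_inverse R0 Ropp Rplus. Proof. exact: Rplus_opp_l. Qed.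

HB.instance Definition _ := GRing.isZmodule.Build R R_addA R_addC R_add0 R_addN.

Lemma R_mulA : associative Rmult. Proof. by move=> x y z; rewrite Rmult_assoc. Qed.
Lemma R_mulC : commutative Rmult. Proof. exact: Rmult_comm. Qed.
Lemma R_mul1 : left_id R1 Rmult. Proof. exact: Rmult_1_l. Qed.
Lemma R_mulDl : left_distributive Rmult Rplus. Proof. by move=> x y z; rewrite Rmult_plus_distr_r. Qed.
Lemma R_one_neq0 : R1 != R0.
Proof. by apply/Req_boolP; exact: R1_neq_R0. Qed.

HB.instance Definition _ :=
  GRing.Zmodule_isComNzRing.Build R R_mulA R_mulC R_mul1 R_mulDl R_one_neq0.

(* Sites n in {-L,...,L} are represented by integers; the 2L+1 coordinates of
   R^{2L+1} are indexed by k : 'I_(2L+1), corresponding to site n = k - L. *)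
Definition zidx (L : nat) (k : 'I_((2 * L + 1)%N)) : Z := Z.sub (Z.of_nat k) (Z.of_nat L).

(* x_m^{-1}, with the convention x_{-L-1}^{-1} = x_{L+1}^{-1} = 0 *)
Definition inv_cut (L : nat) (p : Z -> R) (m : Z) : R :=
  if (Z.abs m <=? Z.of_nat L)%Z then Rinv (p m) else R0.

(* A point of R^{2L+1} is p : Z -> R with p n = x_n (n <> 0) and p 0 = E.
   FL L a p n is the n-th component b_n of F_L(p). *)
Definition FL (L : nat) (a : Z -> R) (p : Z -> R) (n : Z) : R :=
  if (n <? 0)%Z then
    (p 0%Z - a (n - 1)%Z * inv_cut L p (n - 1)%Z - a n * p n)
  else if (n =? 0)%Z then
    (p 0%Z - a (-1)%Z * Rinv (p (-1)%Z) - a 0%Z * Rinv (p 1%Z))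
  else
    (p 0%Z - a n * inv_cut L p (n + 1)%Z - a (n - 1)%Z * p n).

Definition upd (p : Z -> R) (m : Z) (t : R) : Z -> R :=
  fun k => if Z.eq_dec k m then t else p k.

Definition is_jacobian (L : nat) (a : Z -> R) (p : Z -> R)
    (J : 'M[R]_((2 * L + 1)%N)) : Prop :=
  forall i j : 'I_((2 * L + 1)%N),
    derivable_pt_lim (fun t => FL L a (upd p (zidx j) t) (zidx i))
                     (p (zidx j)) (J i j).

Local Open Scope ring_scope.
Definition detR (n : nat) (J : 'M[R]_n) : R := \det J.

Definition tridiag (L : nat) (a b : Z -> R) : 'M[R]_((2 * L + 1)%N) :=
  \matrix_(i, j)
    if i == j then b (zidx i)
    else if (j == i.+1 :> nat) then a (zidx i)
    else if (i == j.+1 :> nat) then a (zidx j)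
    else R0.

Definition zcol (L : nat) (u : Z -> R) : 'cV[R]_((2 * L + 1)%N) :=
  \col_i u (zidx i).

Definition is_eigvec (L : nat) (a b u : Z -> R) (E : R) : Prop :=
  tridiag L a b *m zcol L u = E *: zcol L u.

Local Open Scope R_scope.
Definition pt_of_u (u : Z -> R) (E : R) : Z -> R :=
  fun n => if (n <? 0)%Z then (u (n + 1)%Z / u n)
           else if (n =? 0)%Z then E
           else (u (n - 1)%Z / u n).

Arguments zidx : clear implicits.
Arguments inv_cut : clear implicits.
Arguments FL : clear implicits.
Arguments is_jacobian : clear implicits.
Arguments tridiag : clear implicits.
Arguments zcol : clear implicits.
Arguments is_eigvec : clear implicits.
Arguments detR : clear implicits.

From HB Require Import structures.
From Stdlib Require Import Reals ZArith Lia Lra FunctionalExtensionality.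
From mathcomp Require Import all_boot all_order all_algebra.
From mathcomp Require Import zify.
From mathcomp Require ring.
Import GRing.Theory.

Set Implicit Arguments.
Unset Strict Implicit.
Unset Printing Implicit Defensive.

Delimit Scope Z_scope with Z.
Delimit Scope R_scope with R.

(* Column m of the Jacobian of F_L involves the coordinate x_m only: it is -a_m
   (resp. -a_{m-1}) times e_m - x_m^{-2} e_{m'}, where m' is the neighbour of m
   closer to the centre, and the E-column is all ones.  Once these scalars are
   factored out, the remaining matrix agrees with the product of a lower and an
   upper unitriangular bidiagonal matrix except in its central column, so its
   determinant is the central entry of the solution of two bidiagonal systems
   with right-hand side (1,...,1): by substitution this is
   1 + sum_j prod_{i<=j} x_i^{-2} + sum_j prod_{i<=j} x_{-i}^{-2}.
   At the point built from an eigenvector u these products telescope to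
   u(+-j)^2 / u(0)^2, so the normalisation of u turns the bracket into u(0)^{-2};
   and F_L(x) = b is the eigenvalue equation read row by row. *)

Ltac case_tests := repeat match goal with
  | |- context [ (?x <? ?y)%Z ] => case: (Z.ltb_spec x y) => ?
  | |- context [ (?x =? ?y)%Z ] => case: (Z.eqb_spec x y) => ?
  | |- context [ (?x <=? ?y)%Z ] => case: (Z.leb_spec x y) => ?
  | |- context [ @eq_op _ ?x ?y ] => case: (@eqP _ x y) => ?
  | |- context [ leq ?x ?y ] => case: (leqP x y) => ?
  end.

(* Rewrites [f x] to [f x'] whenever lia proves [x = x']. *)
Ltac unify_args f := repeat match goal with
  | |- context [f ?x] => match goal with
      | |- context [f ?x'] => assert_fails (constr_eq x x');
          let e := fresh in
          assert (e : f x = f x') by (f_equal; lia); rewrite e; clear e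
      end
  end.

Lemma big_nat_offset (T : Type) (idx : T) (op : T -> T -> T) m n (F : nat -> T) :
  \big[op/idx]_(m <= i < m + n) F i = \big[op/idx]_(i < n) F (m + i).
Proof.
rewrite -{1}(add0n m) big_addn addKn big_mkord.
by apply: eq_bigr => i _; rewrite addnC.
Qed.

(** * The determinant of the Jacobian pattern *)

Section NatMatrix.
Variable K : comNzRingType.
Local Open Scope ring_scope.

Definition nat_mx n (f : nat -> nat -> K) : 'M[K]_n := \matrix_(i, k) f i k.

Definition with_col (f : nat -> nat -> K) (j : nat) (w : nat -> K) (i k : nat) : K :=
  if k == j then w i else f i k.

Definition nat_id (i k : nat) : K := (k == i)%:R.

Lemma nat_mxM n (f g : nat -> nat -> K) (i j : 'I_n) :
  (nat_mx n f *m nat_mx n g) i j = \sum_(0 <= k < n) f i k * g k j.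
Proof. by rewrite !mxE big_mkord; apply: eq_bigr => k _; rewrite !mxE. Qed.

Lemma sum_nat_pick n (F : nat -> K) a :
  \sum_(0 <= k < n) F k =
  (if (a < n)%N then F a else 0) + \sum_(0 <= k < n) (if k == a then 0 else F k).
Proof.
elim: n => [|n IH]; first by rewrite !big_geq // add0r.
rewrite !big_nat_recr //= IH ltnS; case: (eqVneq n a) => [->|ne].
  by rewrite ltnn leqnn addr0 add0r addrC.
by rewrite [(a <= n)%N]leq_eqVlt (eq_sym a) (negbTE ne) addrA.
Qed.

Lemma det_with_col_id n j (w : nat -> K) : (j < n)%N ->
  \det (nat_mx n (with_col nat_id j w)) = w j.
Proof.
move=> ltjn; set J := Ordinal ltjn.
rewrite (expand_det_row _ J) (bigD1 J) //= big1 => [|k neq_kJ]; last first.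
  have neq_kj : (k : nat) != j by apply: contra neq_kJ => /eqP kj; apply/eqP/val_inj.
  by rewrite mxE /with_col /nat_id (negbTE neq_kj) mul0r.
rewrite mxE /with_col eqxx addr0 /cofactor.
have -> : row' J (col' J (nat_mx n (with_col nat_id j w))) = 1%:M.
  have lift_neq k : ((lift J k : nat) == j) = false.
    by apply/negbTE; rewrite eq_sym; exact: neq_lift.
  apply/matrixP => i k; rewrite !mxE /with_col lift_neq /nat_id.
  by rewrite (inj_eq val_inj) (inj_eq (@lift_inj _ J)) eq_sym.
by rewrite det1 mulr1 addnn -signr_odd odd_double mulr1.
Qed.

End NatMatrix.

Section JacobianShape.
Variables (K : comNzRingType) (L : nat) (y : nat -> K).
Local Open Scope ring_scope.
Import ring.
Local Notation n := (2 * L + 1)%N.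

Definition jac_shape i k : K :=
  if k == L then 1 else if k == i then 1
  else if (k.+1 == i) && (k < L)%N then - y k
  else if (k == i.+1) && (L < k)%N then - y k else 0.

Definition lower_shape i k : K :=
  if k == i then 1 else if (k.+1 == i) && (k < L)%N then - y k else 0.

Definition upper_shape i k : K :=
  if k == i then 1 else if (k == i.+1) && (L < k)%N then - y k else 0.

Definition left_sum k : K := \sum_(0 <= j < k.+1) \prod_(j <= l < k) y l.

Definition right_sum k : K := \sum_(k <= j < n) \prod_(k.+1 <= l < j.+1) y l.

(* The solutions of [lower_shape v = 1] and [upper_shape w = v]. *)
Definition lower_inv_ones i : K := if (i <= L)%N then left_sum i else 1.

Definition shape_inv_ones i : K :=
  if (i < L)%N then left_sum i
  else if i == L then left_sum L + y L.+1 * right_sum L.+1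
  else right_sum i.

Lemma left_sum0 : left_sum 0 = 1.
Proof. by rewrite /left_sum big_nat1 big_geq. Qed.

Lemma left_sumS k : left_sum k.+1 = 1 + y k * left_sum k.
Proof.
rewrite /left_sum big_nat_recr //= (big_geq (leqnn k.+1)) addrC; congr (_ + _).
rewrite big_distrr; apply: eq_big_nat => j /andP [_ ltjk].
by rewrite big_nat_recr //= mulrC.
Qed.

Lemma right_sumS k : (k.+1 < n)%N -> right_sum k = 1 + y k.+1 * right_sum k.+1.
Proof.
move=> ltkn; rewrite /right_sum big_ltn ?(ltn_trans (ltnSn k) ltkn) // big_geq //.
congr (_ + _); rewrite big_distrr; apply: eq_big_nat => j /andP [ltkj _].
by rewrite big_ltn.
Qed.

Lemma right_sum_last : right_sum (2 * L) = 1.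
Proof. by rewrite /right_sum addn1 big_nat1 big_geq. Qed.

Lemma left_sumE k : left_sum k = 1 + \sum_(j < k) \prod_(i < j.+1) y (k - i.+1).
Proof.
rewrite /left_sum big_nat_recr //= (big_geq (leqnn k)) addrC; congr (_ + _).
rewrite big_rev_mkord subn0; apply: eq_bigr => j _.
by rewrite big_rev_mkord subKn.
Qed.

Lemma right_sumE : y L.+1 * right_sum L.+1 = \sum_(j < L) \prod_(i < j.+1) y (L + i.+1).
Proof.
rewrite /right_sum big_distrr (_ : n = L.+1 + L)%N; last by lia.
rewrite big_nat_offset; apply: eq_bigr => j _.
rewrite -big_ltn ?ltnS ?leq_addr // -addnS big_nat_offset.
by apply: eq_bigr => i _; rewrite addSnnS.
Qed.

Lemma jac_shape_factor : (1 <= L)%N ->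
  nat_mx n jac_shape =
  nat_mx n lower_shape *m nat_mx n (with_col upper_shape L lower_inv_ones).
Proof.
move=> L_gt0; apply/matrixP => i j; rewrite nat_mxM mxE; have ltjn := ltn_ord j.
case: i => [[|i] ltin] /=.
  rewrite (sum_nat_pick _ _ 0%N) big1 => [|k _]; last first.
    by rewrite /lower_shape; case_tests; rewrite ?mul0r //; lia.
  rewrite /jac_shape /lower_shape /with_col /lower_inv_ones /upper_shape left_sum0.
  case_tests => /=; try lia; unify_args y; ring.
rewrite (sum_nat_pick _ _ i.+1) (sum_nat_pick _ _ i) big1 => [|k _]; last first.
  by rewrite /lower_shape; case_tests; rewrite ?mul0r //; lia.
rewrite /jac_shape /lower_shape /with_col /lower_inv_ones /upper_shape left_sumS.
case_tests => /=; try lia; unify_args y; unify_args left_sum; ring.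
Qed.

Lemma upper_with_col_factor : (1 <= L)%N ->
  nat_mx n (with_col upper_shape L lower_inv_ones) =
  nat_mx n upper_shape *m nat_mx n (with_col (nat_id K) L shape_inv_ones).
Proof.
move=> L_gt0; apply/matrixP => i j; rewrite nat_mxM mxE.
have ltjn := ltn_ord j; have ltin := ltn_ord i.
rewrite (sum_nat_pick _ _ i) (sum_nat_pick _ _ i.+1) big1 => [|k _]; last first.
  by rewrite /upper_shape; case_tests; rewrite ?mul0r //; lia.
rewrite /with_col /nat_id /lower_inv_ones /shape_inv_ones /upper_shape.
have [ltin1|lein1] := ltnP i.+1 n.
  rewrite (right_sumS ltin1).
  case_tests => /=; try lia; unify_args y; unify_args left_sum; unify_args right_sum; ring.
have -> : (i : nat) = (2 * L)%N by lia.
rewrite right_sum_last.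
case_tests => /=; try lia; unify_args y; unify_args left_sum; unify_args right_sum; ring.
Qed.

Lemma det_lower_shape : \det (nat_mx n lower_shape) = 1.
Proof.
rewrite det_trig; first by rewrite big1 // => i _; rewrite mxE /lower_shape eqxx.
apply/forallP => i; apply/forallP => j; apply/implyP => ltij; apply/eqP.
by rewrite mxE /lower_shape; case_tests => //=; lia.
Qed.

Lemma det_upper_shape : \det (nat_mx n upper_shape) = 1.
Proof.
rewrite -det_tr det_trig; first by rewrite big1 // => i _; rewrite !mxE /upper_shape eqxx.
apply/forallP => i; apply/forallP => j; apply/implyP => ltij; apply/eqP.
by rewrite !mxE /upper_shape; case_tests => //=; lia.
Qed.

Lemma det_jac_shape : (1 <= L)%N ->
  \det (nat_mx n jac_shape) =
  1 + \sum_(j < L) \prod_(i < j.+1) y (L + i.+1) + \sum_(j < L) \prod_(i < j.+1) y (L - i.+1).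
Proof.
move=> L_gt0; rewrite jac_shape_factor // upper_with_col_factor // !det_mulmx.
rewrite det_lower_shape det_upper_shape det_with_col_id; last by lia.
by rewrite !mul1r /shape_inv_ones ltnn eqxx left_sumE right_sumE addrAC.
Qed.

End JacobianShape.

Definition site (L k : nat) : Z := (Z.of_nat k - Z.of_nat L)%Z.

Section ZidxSplit.
Local Open Scope ring_scope.

Lemma big_zidx_split (V : nmodType) L (g : Z -> V) :
  \sum_(k < 2 * L + 1) g (zidx L k) =
  g 0%Z + \sum_(j < L) g (Z.of_nat j.+1) + \sum_(j < L) g (- Z.of_nat j.+1)%Z.
Proof.
rewrite -(big_mkord (fun _ => true) (fun k => g (site L k))).
rewrite (big_cat_nat _ (n := L)) ?leq0n //; last by lia.
rewrite big_rev_mkord subn0 big_ltn; last by lia.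
rewrite (_ : 2 * L + 1 = L.+1 + L)%N; last by lia.
rewrite big_nat_offset (_ : site L L = 0%Z); last by rewrite /site; lia.
rewrite -[LHS]/(\sum_(k < L) _ + (g 0%Z + \sum_(i < L) _)) (addrC (\sum_(k < L) _)).
by congr (_ + _ + _); apply: eq_bigr => j _; congr g; move: (ltn_ord j); rewrite /site; lia.
Qed.

End ZidxSplit.

Local Open Scope R_scope.

Lemma R_zeroE : (@GRing.zero _ : R) = 0. Proof. by []. Qed.
Lemma R_oneE : (@GRing.one _ : R) = 1. Proof. by []. Qed.
Lemma R_oppE (x : R) : (GRing.opp x : R) = - x. Proof. by []. Qed.
Lemma R_addE (x y : R) : (GRing.add x y : R) = x + y. Proof. by []. Qed.
Lemma R_mulE (x y : R) : (GRing.mul x y : R) = x * y. Proof. by []. Qed.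

HB.instance Definition _ := Monoid.isComLaw.Build R R1 Rmult R_mulA R_mulC R_mul1.
HB.instance Definition _ := Monoid.isComLaw.Build R R0 Rplus R_addA R_addC R_add0.

(** * Partial derivatives of F_L *)

Lemma derivable_pt_lim_eq f g x l : f =1 g -> derivable_pt_lim f x l -> derivable_pt_lim g x l.
Proof. by move=> /functional_extensionality ->. Qed.

Lemma derivable_pt_lim_Rinv x : x <> 0 -> derivable_pt_lim Rinv x (- / x ^ 2).
Proof.
move=> x_neq0.
have -> : - / x ^ 2 = (0 * x - 1 * 1) / Rsqr x by rewrite /Rsqr; field.
apply: derivable_pt_lim_eq (derivable_pt_lim_div (fct_cte 1) (fun t => t) x 0 1
  (derivable_pt_lim_const 1 x) (derivable_pt_lim_id x) x_neq0) => t.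
by rewrite /div_fct /fct_cte /Rdiv Rmult_1_l.
Qed.

Definition kron (k m : Z) : R := if (k =? m)%Z then 1 else 0.

Lemma upd_derivable p m k : derivable_pt_lim (fun t => upd p m t k) (p m) (kron k m).
Proof.
rewrite /upd /kron; case: (Z.eq_dec k m) => [k_eq_m|k_neq_m] /=.
  rewrite (Z.eqb_eq _ _).2 //; exact: derivable_pt_lim_id.
rewrite (Z.eqb_neq _ _).2 //; exact: derivable_pt_lim_const.
Qed.

Lemma Rinv_upd_derivable p m k : p k <> 0 ->
  derivable_pt_lim (fun t => / upd p m t k) (p m) (- kron k m * / p k ^ 2).
Proof.
move=> pk_neq0; rewrite /upd /kron; case: (Z.eq_dec k m) => [k_eq_m|k_neq_m] /=.
  rewrite (Z.eqb_eq _ _).2 // -Ropp_mult_distr_l Rmult_1_l -k_eq_m.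
  exact: derivable_pt_lim_Rinv.
rewrite (Z.eqb_neq _ _).2 // Ropp_0 Rmult_0_l; exact: derivable_pt_lim_const.
Qed.

Definition inv_cut_partial (L : nat) (p : Z -> R) (k m : Z) : R :=
  if (Z.abs k <=? Z.of_nat L)%Z then - kron k m * / p k ^ 2 else 0.

Lemma inv_cut_upd_derivable L p m k :
  ((Z.abs k <= Z.of_nat L)%Z -> p k <> 0) ->
  derivable_pt_lim (fun t => inv_cut L (upd p m t) k) (p m) (inv_cut_partial L p k m).
Proof.
rewrite /inv_cut /inv_cut_partial; case: Z.leb_spec => [k_in pk_neq0|_ _].
  exact: Rinv_upd_derivable (pk_neq0 k_in).
exact: derivable_pt_lim_const.
Qed.

Definition FL_partial (L : nat) (a p : Z -> R) (n m : Z) : R :=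
  if (n <? 0)%Z then
    kron 0 m - a (n - 1)%Z * inv_cut_partial L p (n - 1) m - a n * kron n m
  else if (n =? 0)%Z then
    kron 0 m - a (-1)%Z * (- kron (-1) m * / p (-1)%Z ^ 2) - a 0%Z * (- kron 1 m * / p 1%Z ^ 2)
  else kron 0 m - a n * inv_cut_partial L p (n + 1) m - a (n - 1)%Z * kron n m.

Lemma FL_derivable L a p n m : (1 <= L)%N ->
  (forall k : Z, (1 <= Z.abs k <= Z.of_nat L)%Z -> p k <> 0) ->
  derivable_pt_lim (fun t => FL L a (upd p m t) n) (p m) (FL_partial L a p n m).
Proof.
move=> L_gt0 p_neq0; rewrite /FL /FL_partial.
have upd_lin c k := derivable_pt_lim_scal _ c _ _ (upd_derivable p m k).
case: Z.ltb_spec => [n_lt0|n_ge0].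
  apply: derivable_pt_lim_minus; last exact: upd_lin.
  apply: derivable_pt_lim_minus; first exact: upd_derivable.
  apply: derivable_pt_lim_scal; apply: inv_cut_upd_derivable => ?; apply: p_neq0; lia.
have inv_lin c k : (1 <= Z.abs k <= Z.of_nat L)%Z ->
    derivable_pt_lim (fun t => c * / upd p m t k) (p m) (c * (- kron k m * / p k ^ 2)).
  by move=> k_in; apply: derivable_pt_lim_scal; apply: Rinv_upd_derivable; apply: p_neq0.
case: Z.eqb_spec => [n_eq0|n_neq0].
  apply: derivable_pt_lim_minus; last by apply: inv_lin; lia.
  apply: derivable_pt_lim_minus; first exact: upd_derivable.
  by apply: inv_lin; lia.
apply: derivable_pt_lim_minus; last exact: upd_lin.
apply: derivable_pt_lim_minus; first exact: upd_derivable.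
apply: derivable_pt_lim_scal; apply: inv_cut_upd_derivable => ?; apply: p_neq0; lia.
Qed.

Definition inv_sq (L : nat) (p : Z -> R) (k : nat) : R := / p (site L k) ^ 2.

Definition col_scale (L : nat) (a : Z -> R) (k : nat) : R :=
  if (k < L)%N then - a (site L k) else if k == L then 1 else - a (site L k - 1)%Z.

Lemma FL_partial_factor L a p i j : (1 <= L)%N -> (i < 2 * L + 1)%N -> (j < 2 * L + 1)%N ->
  FL_partial L a p (site L i) (site L j) = jac_shape L (inv_sq L p) i j * col_scale L a j.
Proof.
move=> L_gt0 ltin ltjn.
rewrite /FL_partial /inv_cut_partial /kron /jac_shape /inv_sq /col_scale /site.
case_tests => /=; try lia; unify_args a; unify_args p.
all: rewrite ?R_zeroE ?R_oneE ?R_oppE; ring.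
Qed.

(** * The Jacobian determinant *)

Definition jacobian (L : nat) (a p : Z -> R) : 'M[R]_(2 * L + 1) :=
  \matrix_(i, j) FL_partial L a p (zidx L i) (zidx L j).

Definition jac_bracket (L : nat) (p : Z -> R) : R :=
  1 + \big[Rplus/R0]_(j < L) \big[Rmult/R1]_(i < j.+1) / (p (Z.of_nat i.+1) ^ 2)
    + \big[Rplus/R0]_(j < L) \big[Rmult/R1]_(i < j.+1) / (p (- Z.of_nat i.+1)%Z ^ 2).

Lemma jac_bracket_ge0 L p : 0 <= jac_bracket L p.
Proof.
have sum_ge0 (q : nat -> R) :
    0 <= \big[Rplus/R0]_(j < L) \big[Rmult/R1]_(i < j.+1) / (q i ^ 2).
  apply: (big_ind (Rle 0)) => [|x y|j _]; [exact: Rle_refl|exact: Rplus_le_le_0_compat|].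
  apply: (big_ind (Rle 0)) => [|x y|i _]; [exact: Rle_0_1|exact: Rmult_le_pos|].
  by rewrite -pow_inv; apply: pow2_ge_0.
rewrite /jac_bracket; have := sum_ge0 (fun i => p (Z.of_nat i.+1)).
have := sum_ge0 (fun i => p (- Z.of_nat i.+1)%Z); lra.
Qed.

Lemma Rabs_prod_col_scale L a : (1 <= L)%N ->
  (forall n : Z, (- Z.of_nat L - 1 <= n <= Z.of_nat L)%Z -> 0 < a n) ->
  Rabs (\big[Rmult/R1]_(j < 2 * L + 1) col_scale L a j) =
  \big[Rmult/R1]_(k < 2 * L) a (Z.of_nat k - Z.of_nat L)%Z.
Proof.
move=> L_gt0 a_gt0.
rewrite (big_morph Rabs Rabs_mult Rabs_R1).
rewrite -(big_mkord (fun _ => true) (fun j => Rabs (col_scale L a j))).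
rewrite -(big_mkord (fun _ => true) (fun k => a (Z.of_nat k - Z.of_nat L)%Z)).
rewrite [LHS](big_cat_nat _ (n := L)) ?leq0n //; last by lia.
rewrite [RHS](big_cat_nat _ (n := L)) ?leq0n //; last by lia.
congr (_ * _).
  apply: eq_big_nat => j /andP [_ ltjL].
  rewrite /col_scale ltjL Rabs_Ropp Rabs_pos_eq //; apply: Rlt_le; apply: a_gt0; rewrite /site; lia.
rewrite big_ltn; last by lia.
rewrite /col_scale ltnn eqxx Rabs_R1 Monoid.mul1m.
rewrite (_ : 2 * L + 1 = L.+1 + L)%N; last by lia.
rewrite (_ : 2 * L = L + L)%N; last by lia.
rewrite !big_nat_offset; apply: eq_bigr => i _; have := ltn_ord i => ltiL.
rewrite (_ : (L.+1 + i < L)%N = false); last by lia.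
rewrite (_ : (L.+1 + i == L)%N = false); last by lia.
rewrite Rabs_Ropp Rabs_pos_eq; last by apply: Rlt_le; apply: a_gt0; rewrite /site; lia.
congr a; rewrite /site; lia.
Qed.

Section Jacobian.
Variables (L : nat) (a p : Z -> R).
Hypothesis L_gt0 : (1 <= L)%N.
Hypothesis p_neq0 : forall n : Z, (1 <= Z.abs n <= Z.of_nat L)%Z -> p n <> 0.

Lemma is_jacobian_jacobian : is_jacobian L a p (jacobian L a p).
Proof. by move=> i j; rewrite mxE; apply: FL_derivable. Qed.

Lemma is_jacobian_eq J : is_jacobian L a p J -> J = jacobian L a p.
Proof.
move=> J_jac; apply/matrixP => i j; rewrite mxE.
apply: (uniqueness_limite _ _ _ _ (J_jac i j)); exact: FL_derivable.
Qed.

Lemma det_jacobian :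
  detR _ (jacobian L a p) = jac_bracket L p * \big[Rmult/R1]_(j < 2 * L + 1) col_scale L a j.
Proof.
have -> : jacobian L a p =
    mulmx (nat_mx _ (jac_shape L (inv_sq L p))) (diag_mx (\row_j col_scale L a j)).
  by apply/matrixP => i j; rewrite mul_mx_diag !mxE FL_partial_factor.
rewrite /detR det_mulmx det_diag det_jac_shape //; congr (_ * _); last first.
  by apply: eq_bigr => j _; rewrite mxE.
rewrite /jac_bracket /inv_sq /site; congr (_ + _ + _);
  apply: eq_bigr => j _; apply: eq_bigr => i _;
  move: (ltn_ord i) (ltn_ord j) => lt_ij lt_jL; congr (/ p _ ^ 2); lia.
Qed.

Lemma Rabs_det_jacobian J :
  (forall n : Z, (- Z.of_nat L - 1 <= n <= Z.of_nat L)%Z -> 0 < a n) ->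
  is_jacobian L a p J ->
  Rabs (detR _ J) = \big[Rmult/R1]_(k < 2 * L) a (Z.of_nat k - Z.of_nat L)%Z * jac_bracket L p.
Proof.
move=> a_gt0 J_jac; rewrite (is_jacobian_eq J_jac) det_jacobian Rabs_mult.
by rewrite Rabs_prod_col_scale // (Rabs_pos_eq _ (jac_bracket_ge0 L p)) Rmult_comm.
Qed.

End Jacobian.

(** * The point built from an eigenvector *)

Definition tridiag_entry (L : nat) (a b : Z -> R) (i k : nat) : R :=
  if i == k then b (site L i) else if k == i.+1 then a (site L i)
  else if i == k.+1 then a (site L k) else 0.

Lemma prod_inv_sq_ratio (f : nat -> R) m : (forall i, (i <= m)%N -> f i <> 0) ->
  \big[Rmult/R1]_(i < m) / (f i / f i.+1) ^ 2 = (f m / f 0%N) ^ 2.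
Proof.
elim: m => [|m IHm] f_neq0.
  by rewrite big_ord0; field; apply: f_neq0.
rewrite big_ord_recr /= IHm => [|i le_im]; last by apply: f_neq0; lia.
by field; split; [|split]; apply: f_neq0; lia.
Qed.

Section Eigenvector.
Variables (L : nat) (a b u : Z -> R) (E : R).
Hypothesis L_gt0 : (1 <= L)%N.
Hypothesis u_neq0 : forall n : Z, (Z.abs n <= Z.of_nat L)%Z -> u n <> 0.

Lemma eigvec_row i : is_eigvec L a b u E -> (i < 2 * L + 1)%N ->
  b (site L i) * u (site L i)
  + (if (i.+1 < 2 * L + 1)%N then a (site L i) * u (site L i.+1) else 0)
  + (if (0 < i)%N then a (site L i.-1) * u (site L i.-1) else 0) = E * u (site L i).
Proof.
move=> eig ltin.
have := congr1 (fun v : 'cV[R]_(2 * L + 1) => v (Ordinal ltin) ord0) eig.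
rewrite !mxE => row_eq; apply: etrans row_eq.
rewrite (_ : \big[_/_]_(j < _) _ = \big[Rplus/R0]_(k <- index_iota 0 (2 * L + 1))
    (tridiag_entry L a b i k * u (site L k))); last first.
  by rewrite big_mkord; apply: eq_bigr => k _; rewrite !mxE.
case: i ltin => [|i] ltin.
  rewrite (sum_nat_pick _ _ 0%N) (sum_nat_pick _ _ 1%N) big1 => [|k _]; last first.
    by rewrite /tridiag_entry; case_tests => //=; rewrite ?R_mulE ?Rmult_0_l //; lia.
  by rewrite /tridiag_entry; case_tests => /=; try lia; rewrite ?R_addE ?R_mulE ?R_zeroE; ring.
rewrite (sum_nat_pick _ _ i.+1) (sum_nat_pick _ _ i.+2) (sum_nat_pick _ _ i) big1 => [|k _].
  by rewrite /tridiag_entry; case_tests => /=; try lia; rewrite ?R_addE ?R_mulE ?R_zeroE; ring.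
by rewrite /tridiag_entry; case_tests => //=; rewrite ?R_mulE ?Rmult_0_l //; lia.
Qed.

Lemma FL_pt_of_u n : is_eigvec L a b u E -> (Z.abs n <= Z.of_nat L)%Z ->
  FL L a (pt_of_u u E) n = b n.
Proof.
move=> eig n_in.
have [i ltin ->] : exists2 i, (i < 2 * L + 1)%N & n = site L i.
  by exists (Z.to_nat (n + Z.of_nat L)); rewrite /site; lia.
have ui_neq0 : u (site L i) <> 0 by apply: u_neq0; rewrite /site; lia.
have -> : b (site L i) = E
    - (if (i.+1 < 2 * L + 1)%N then a (site L i) * u (site L i.+1) / u (site L i) else 0)
    - (if (0 < i)%N then a (site L i.-1) * u (site L i.-1) / u (site L i) else 0).
  move: (eigvec_row eig ltin); case: (i.+1 < _)%N; case: (0 < i)%N => row;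
  apply: (Rmult_eq_reg_r (u (site L i))) => //; field_simplify => //; lra.
case: i ltin ui_neq0 => [|i] ltin ui_neq0;
  rewrite /FL /pt_of_u /inv_cut /site; case_tests; try lia;
  unify_args a; unify_args u; field; repeat split; apply: u_neq0; lia.
Qed.

Lemma pt_of_u_neq0 n : (1 <= Z.abs n <= Z.of_nat L)%Z -> pt_of_u u E n <> 0.
Proof.
move=> n_in; have ratio_neq0 k m : (Z.abs k <= Z.of_nat L)%Z -> (Z.abs m <= Z.of_nat L)%Z ->
    u k / u m <> 0.
  move=> k_in m_in; apply: Rmult_integral_contrapositive_currified; first exact: u_neq0.
  exact/Rinv_neq_0_compat/u_neq0.
rewrite /pt_of_u; case: Z.ltb_spec => n_lt0; first by apply: ratio_neq0; lia.
by case: Z.eqb_spec => n_eq0; [lia | apply: ratio_neq0; lia].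
Qed.

Lemma pt_of_u_pos (i : nat) : pt_of_u u E (Z.of_nat i.+1) = u (Z.of_nat i) / u (Z.of_nat i.+1).
Proof.
rewrite /pt_of_u; case: Z.ltb_spec => [|_]; first lia.
by case: Z.eqb_spec => [|_]; [lia | congr (u _ / _); lia].
Qed.

Lemma pt_of_u_neg (i : nat) :
  pt_of_u u E (- Z.of_nat i.+1) = u (- Z.of_nat i)%Z / u (- Z.of_nat i.+1)%Z.
Proof. by rewrite /pt_of_u; case: Z.ltb_spec => [_|]; [congr (u _ / _); lia | lia]. Qed.

Lemma prod_pt_of_u (f : nat -> Z) j : f 0%N = 0%Z -> (j < L)%N ->
  (forall i, (i <= L)%N -> (Z.abs (f i) <= Z.of_nat L)%Z) ->
  (forall i, pt_of_u u E (f i.+1) = u (f i) / u (f i.+1)) ->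
  \big[Rmult/R1]_(i < j.+1) / (pt_of_u u E (f i.+1) ^ 2) = u (f j.+1) ^ 2 * / u 0%Z ^ 2.
Proof.
move=> f0 ltjL f_in pt_f; have uf_neq0 i : (i <= L)%N -> u (f i) <> 0.
  by move=> le_iL; apply/u_neq0/f_in.
rewrite (eq_bigr (fun i : 'I_j.+1 => / (u (f i) / u (f i.+1)) ^ 2)) => [|i _]; last by rewrite pt_f.
rewrite (prod_inv_sq_ratio (f := fun i => u (f i))) => [|i le_ij]; last by apply: uf_neq0; lia.
by rewrite f0; field; apply: u_neq0; lia.
Qed.

Lemma jac_bracket_pt_of_u :
  \big[Rplus/R0]_(k < 2 * L + 1) (u (zidx L k)) ^ 2 = 1 ->
  jac_bracket L (pt_of_u u E) = / u 0%Z ^ 2.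
Proof.
move=> u_normed.
have u0_neq0 : u 0%Z <> 0 by apply: u_neq0; lia.
have sum_mulr (F : 'I_L -> R) c :
    \big[Rplus/R0]_(j < L) (F j * c) = \big[Rplus/R0]_(j < L) F j * c.
  by symmetry; apply: mulr_suml.
rewrite /jac_bracket.
rewrite (eq_bigr _ (fun j _ => prod_pt_of_u (f := Z.of_nat) erefl (ltn_ord j) _ pt_of_u_pos));
  last by move=> j _ i le_iL; lia.
rewrite (eq_bigr _ (fun j _ =>
  prod_pt_of_u (f := fun i => (- Z.of_nat i)%Z) erefl (ltn_ord j) _ pt_of_u_neg));
  last by move=> j _ i le_iL; lia.
rewrite !sum_mulr.
set A := \big[Rplus/R0]_(j < L) u (Z.of_nat j.+1) ^ 2.
set B := \big[Rplus/R0]_(j < L) u (- Z.of_nat j.+1)%Z ^ 2.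
have norm : u 0%Z ^ 2 + A + B = 1.
  by rewrite -u_normed (big_zidx_split L (fun z => u z ^ 2)).
have -> : A = 1 - u 0%Z ^ 2 - B by lra.
by field.
Qed.

End Eigenvector.

Theorem mainTheorem9 (L : nat) (a : Z -> R) :
  (1 <= L)%N ->
  (forall n : Z, (- Z.of_nat L - 1 <= n <= Z.of_nat L)%Z -> 0 < a n) ->
  (forall p : Z -> R,
     (forall n : Z, (1 <= Z.abs n <= Z.of_nat L)%Z -> p n <> 0) ->
     (exists J : 'M[R]_(2 * L + 1), is_jacobian L a p J) /\
     (forall J : 'M[R]_(2 * L + 1), is_jacobian L a p J ->
        Rabs (detR _ J) =
        (\big[Rmult/R1]_(k < 2 * L) a (Z.of_nat k - Z.of_nat L)%Z) *
        (1 + \big[Rplus/R0]_(j < L) \big[Rmult/R1]_(i < j.+1)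
                 / (p (Z.of_nat i.+1) ^ 2)
           + \big[Rplus/R0]_(j < L) \big[Rmult/R1]_(i < j.+1)
                 / (p (- Z.of_nat i.+1)%Z ^ 2)))) /\
  (forall (u b : Z -> R) (E : R),
     \big[Rplus/R0]_(k < 2 * L + 1) (u (zidx L k)) ^ 2 = 1 ->
     (forall n : Z, (Z.abs n <= Z.of_nat L)%Z -> u n <> 0) ->
     is_eigvec L a b u E ->
     (forall J : 'M[R]_(2 * L + 1), is_jacobian L a (pt_of_u u E) J ->
        Rabs (detR _ J) =
        (\big[Rmult/R1]_(k < 2 * L) a (Z.of_nat k - Z.of_nat L)%Z) * / (u 0%Z ^ 2)) /\
     (forall n : Z, (Z.abs n <= Z.of_nat L)%Z -> FL L a (pt_of_u u E) n = b n)).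
Proof.
move=> L_gt0 a_gt0; split=> [p p_neq0 | u b E u_normed u_neq0 eig].
  split; first by exists (jacobian L a p); exact: is_jacobian_jacobian.
  by move=> J J_jac; exact: Rabs_det_jacobian.
split=> [J J_jac | n n_in]; last exact: FL_pt_of_u.
have pt_neq0 n : (1 <= Z.abs n <= Z.of_nat L)%Z -> pt_of_u u E n <> 0.
  exact: pt_of_u_neq0.
by rewrite (Rabs_det_jacobian L_gt0 pt_neq0 a_gt0 J_jac) jac_bracket_pt_of_u.
Qed.
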